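(* Let $(\mathcal{X},\kappa)$ be a finite similarity space with Gram matrix $\mathbf{K}$, let $\mathcal{Y}$ be a finite set, and let $(X,Y)$ be a random pair with values in $\mathcal{X}\times\mathcal{Y}$, with marginal law $\mathbb{P}_y$ of $Y$. Then for any such kernel $\kappa$, $$\mathbb{H}^{\mathbf{K},\mathbf{I}}[X\mid Y]=\mathbb{E}_{y\sim\mathbb{P}_y}\big[\mathbb{H}^{\mathbf{K}}[X\mid Y=y]\big].$$
   Context: A finite similarity space $(\mathcal{X},\kappa)$ is a finite set with a symmetric $\kappa:\mathcal{X}\times\mathcal{X}\to[0,1]$ with $\kappa(x,x)=1$; its Gram matrix is $\mathbf{K}_{x,y}=\kappa(x,y)$. For a distribution $\mathbb{P}$ on $\mathcal{X}$, $(\mathbf{K}\mathbb{P})(x)=\sum_y\kappa(x,y)\mathbb{P}(y)$ and the GAIT entropy is $\mathbb{H}^{\mathbf{K}}[\mathbb{P}]=-\sum_x\mathbb{P}(x)\log(\mathbf{K}\mathbb{P})(x)$ (with $0\log0=0$). $\mathbf{I}$ denotes the identity kernel on $\mathcal{Y}$ ($\iota(y,y')=1$ if $y=y'$, else $0$). For kernels $\kappa$ on $\mathcal{X}$ and $\lambda$ on $\mathcal{Y}$ with Gram matrices $\mathbf{K},\mathbf{\Lambda}$, the joint entropy $\mathbb{H}^{\mathbf{K}\otimes\mathbf{\Lambda}}[X,Y]$ is the GAIT entropy of the joint law of $(X,Y)$ with respect to the product kernel $\kappa(x,x')\lambda(y,y')$, and the conditional entropy is $\mathbb{H}^{\mathbf{K},\mathbf{\Lambda}}[X\mid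 Y]=\mathbb{H}^{\mathbf{K}\otimes\mathbf{\Lambda}}[X,Y]-\mathbb{H}^{\mathbf{\Lambda}}[Y]$. $\mathbb{H}^{\mathbf{K}}[X\mid Y=y]$ denotes the GAIT entropy of the conditional law of $X$ given $Y=y$. *)

From mathcomp Require Import all_boot all_order all_algebra.
From mathcomp Require Import reals exp.
Set Implicit Arguments. Unset Strict Implicit. Unset Printing Implicit Defensive.
Import Order.TTheory GRing.Theory Num.Theory.
Local Open Scope ring_scope.

Section GAIT.
Variable R : realType.

Definition similarity_kernel (T : finType) (k : T -> T -> R) : Prop :=
  (forall x y, k x y = k y x) /\ (forall x y, 0 <= k x y <= 1) /\ (forall x, k x x = 1).

Definition is_distr (T : finType) (P : T -> R) : Prop :=
  (forall x, 0 <= P x) /\ \sum_(x : T) P x = 1.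

Definition Kmul (T : finType) (k : T -> T -> R) (P : T -> R) (x : T) : R :=
  \sum_(y : T) k x y * P y.

Definition gait_entropy (T : finType) (k : T -> T -> R) (P : T -> R) : R :=
  - \sum_(x : T) (if P x == 0 then 0 else P x * ln (Kmul k P x)).

Definition id_kernel (T : finType) (y y' : T) : R := if y == y' then 1 else 0.

Definition prod_kernel (X Y : finType) (k : X -> X -> R) (l : Y -> Y -> R)
  (u v : X * Y) : R := k u.1 v.1 * l u.2 v.2.

Definition marginal2 (X Y : finType) (P : X * Y -> R) (y : Y) : R :=
  \sum_(x : X) P (x, y).

Definition cond_law (X Y : finType) (P : X * Y -> R) (y : Y) (x : X) : R :=
  P (x, y) / marginal2 P y.

Definition gait_cond_entropy (X Y : finType) (k : X -> X -> R) (l : Y -> Y -> R)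
  (P : X * Y -> R) : R :=
  gait_entropy (prod_kernel k l) P - gait_entropy l (marginal2 P).

End GAIT.

From mathcomp Require Import all_boot all_order all_algebra.
From mathcomp Require Import reals exp.
Set Implicit Arguments. Unset Strict Implicit. Unset Printing Implicit Defensive.
Import Order.TTheory GRing.Theory Num.Theory.
Local Open Scope ring_scope.

(* With the identity kernel on Y the product kernel never mixes different
   values of y, so the joint GAIT entropy splits into the sum over y of the
   entropies of the unnormalised slices P(., y), while the entropy of Y is the
   Shannon entropy of the marginal.  Normalising a slice by its mass m > 0
   shifts every log-similarity by ln m, which produces exactly the m ln m
   terms of the Shannon entropy. *)

Lemma sumr_pair (R : nmodType) (X Y : finType) (F : X * Y -> R) :
  \sum_(v : X * Y) F v = \sum_(x : X) \sum_(y : Y) F (x, y).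
Proof. by rewrite pair_bigA; apply: eq_bigr => -[]. Qed.

Section IdentityKernel.
Variables (R : realType) (Y : finType).

Lemma sum_id_kernel (y : Y) (F : Y -> R) :
  \sum_(j : Y) @id_kernel R Y y j * F j = F y.
Proof.
rewrite (bigD1 y) //= big1 ?addr0; first by rewrite /id_kernel eqxx mul1r.
by move=> j /negbTE nyj; rewrite /id_kernel eq_sym nyj mul0r.
Qed.

Lemma Kmul_id_kernel (Q : Y -> R) : Kmul (@id_kernel R Y) Q =1 Q.
Proof. by move=> y; rewrite /Kmul sum_id_kernel. Qed.

Lemma gait_entropy_id_kernel (Q : Y -> R) :
  gait_entropy (@id_kernel R Y) Q =
  - \sum_(y : Y) (if Q y == 0 then 0 else Q y * ln (Q y)).
Proof. by congr (- _); apply: eq_bigr => y _; rewrite Kmul_id_kernel. Qed.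

Variables (X : finType) (k : X -> X -> R).

Lemma Kmul_prod_id_kernel (P : X * Y -> R) (x : X) (y : Y) :
  Kmul (prod_kernel k (@id_kernel R Y)) P (x, y) =
  Kmul k (fun x' => P (x', y)) x.
Proof.
rewrite /Kmul sumr_pair; apply: eq_bigr => x' _.
under eq_bigr => j _ do rewrite /prod_kernel /= -mulrA.
by rewrite -mulr_sumr sum_id_kernel.
Qed.

Lemma gait_entropy_prod_id_kernel (P : X * Y -> R) :
  gait_entropy (prod_kernel k (@id_kernel R Y)) P =
  \sum_(y : Y) gait_entropy k (fun x => P (x, y)).
Proof.
rewrite /gait_entropy sumrN sumr_pair exchange_big; congr (- _).
by apply: eq_bigr => x _; apply: eq_bigr => y _; rewrite Kmul_prod_id_kernel.
Qed.

End IdentityKernel.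

Lemma Kmul_divr (R : realType) (T : finType) (k : T -> T -> R) (Q : T -> R)
    (c : R) (x : T) :
  Kmul k (fun x' => Q x' / c) x = Kmul k Q x / c.
Proof. by rewrite /Kmul mulr_suml; apply: eq_bigr => x' _; rewrite mulrA. Qed.

Section Normalisation.
Variables (R : realType) (T : finType) (k : T -> T -> R).
Hypotheses (k_ge0 : forall x y, 0 <= k x y) (k_diag : forall x, k x x = 1).
Variables (Q : T -> R).
Hypothesis Q_ge0 : forall x, 0 <= Q x.

Lemma Kmul_ge_self (x : T) : Q x <= Kmul k Q x.
Proof.
rewrite /Kmul (bigD1 x) //= k_diag mul1r lerDl.
by apply: sumr_ge0 => x' _; apply: mulr_ge0.
Qed.

Lemma gait_entropy_divr (c : R) : 0 < c ->
  gait_entropy k (fun x => Q x / c) =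
  (gait_entropy k Q + (\sum_(x : T) Q x) * ln c) / c.
Proof.
move=> c_gt0; rewrite /gait_entropy mulr_suml -!sumrN -big_split mulr_suml.
apply: eq_bigr => x _ /=.
rewrite mulf_eq0 invr_eq0 (gt_eqF c_gt0) orbF.
have [->|Qx_neq0] := eqVneq (Q x) 0; first by rewrite !mul0r oppr0 add0r mul0r.
have Qx_gt0 : 0 < Q x by rewrite lt_def Qx_neq0 Q_ge0.
have KQx_gt0 : 0 < Kmul k Q x by apply: lt_le_trans Qx_gt0 (Kmul_ge_self x).
rewrite Kmul_divr ln_div ?posrE // mulrBr.
by rewrite mulrDl mulNr opprB addrC 2!(mulrAC (Q x) (ln _)).
Qed.

Lemma mass_mul_gait_entropy_normalised (m := \sum_(x : T) Q x) :
  m * gait_entropy k (fun x => Q x / m) =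
  gait_entropy k Q + (if m == 0 then 0 else m * ln m).
Proof.
have [m0|m_neq0] := eqVneq m 0.
  have Q0 : forall x, Q x = 0 by move=> x; apply: (psumr_eq0P _ m0).
  rewrite m0 mul0r addr0 /gait_entropy big1 ?oppr0 // => x _.
  by rewrite Q0 eqxx.
have m_gt0 : 0 < m by rewrite lt_def m_neq0 sumr_ge0.
by rewrite gait_entropy_divr // mulrC divfK.
Qed.

End Normalisation.

Theorem theorem4 (R : realType) (X Y : finType) (k : X -> X -> R)
  (P : X * Y -> R) :
  similarity_kernel k -> is_distr P ->
  gait_cond_entropy k (@id_kernel R Y) P =
  \sum_(y : Y) marginal2 P y * gait_entropy k (cond_law P y).
Proof.
move=> [_ [k_bounds k_diag]] [P_ge0 _].
have k_ge0 x x' : 0 <= k x x' by case/andP: (k_bounds x x').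
rewrite /gait_cond_entropy gait_entropy_prod_id_kernel gait_entropy_id_kernel.
rewrite opprK -big_split /=; apply: eq_bigr => y _.
have slice_ge0 x : 0 <= P (x, y) by apply: P_ge0.
by rewrite (mass_mul_gait_entropy_normalised k_ge0 k_diag slice_ge0).
Qed.
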